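(* Fix $s\in\mathfrak{S}$ and the objects in the context. Let $\widetilde p$ denote the joint distribution of $(\widetilde U^{1:N},\widetilde X^{1:N},\widetilde Y^{1:N},\widetilde Z^{1:N}(s))$ produced by the block construction described in the context, and let $q_{U^{1:N}X^{1:N}Y^{1:N}Z^{1:N}(s)}\triangleq\prod_{i=1}^N q_{UXYZ(s)}$. Then $$\mathbb{D}\big(q_{U^{1:N}X^{1:N}Y^{1:N}Z^{1:N}(s)}\,\big\|\,\widetilde p_{U^{1:N}X^{1:N}Y^{1:N}Z^{1:N}(s)}\big)\leq 2LK\delta_K.$$
   Context: Let $q_{UX}$ be a pmf on $\{0,1\}^2$, and $p_{YZ(s)|X}$ a channel with finite output alphabets; set $q_{UXYZ(s)}=q_{UX}p_{YZ(s)|X}$. Let $K$ be a power of two, $L\in\mathbb{N}$, $N=KL$, $G_K=\begin{bmatrix}1&0\\1&1\end{bmatrix}^{\otimes\log_2 K}$ over $\mathrm{GF}(2)$ (so $G_K^{-1}=G_K$). For $(U^{1:K},X^{1:K})\sim\prod_{i=1}^K q_{UX}$ let $A^{1:K}=U^{1:K}G_K$, $V^{1:K}=X^{1:K}G_K$. Let $\delta_K=2^{-K^\beta}$ with $\beta\in(0,1/2)$, $\mathcal{V}_U=\{i: H(A^i|A^{1:i-1})>1-\delta_K\}$, $\mathcal{V}_{X|U}=\{i: H(V^i|V^{1:i-1}U^{1:K})>1-\delta_K\}$. Construction of one block: there are $L$ mutually independent sub-blocks $l=1,\dots,L$. In each sub-block, $\widetilde A^{1:K}$ is generated as follows: the bits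 $\widetilde A^{1:K}[\mathcal{V}_U]$ are set to a uniformly distributed string (of length $|\mathcal{V}_U|$, independent across sub-blocks and of all other randomness), and for $j\notin\mathcal{V}_U$, in increasing order of $j$, $\widetilde A^j$ is drawn according to $q_{A^j|A^{1:j-1}}(\cdot|\widetilde A^{1:j-1})$; then $\widetilde U^{1:K}=\widetilde A^{1:K}G_K$. Next, $\widetilde V^{1:K}$ is drawn successively: for $j\in\mathcal{V}_{X|U}$, $\widetilde V^j$ is a uniform bit, and for $j\notin\mathcal{V}_{X|U}$, $\widetilde V^j\sim q_{V^j|V^{1:j-1}U^{1:K}}(\cdot|\widetilde V^{1:j-1},\widetilde U^{1:K})$; set $\widetilde X^{1:K}=\widetilde V^{1:K}G_K$, and let $(\widetilde Y^{1:K},\widetilde Z^{1:K}(s))$ be the output of $K$ independent uses of $p_{YZ(s)|X}$ with input $\widetilde X^{1:K}$. The length-$N$ sequences $\widetilde U^{1:N},\widetilde X^{1:N},\widetilde Y^{1:N},\widetilde Z^{1:N}(s)$ are the concatenations over the $L$ sub-blocks. $\mathbb{D}$ denotes Kullback–Leibler divergence. *)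

From HB Require Import structures.
From mathcomp Require Import all_boot all_order all_algebra.
From mathcomp Require Import all_classical all_reals all_analysis.
Set Implicit Arguments.
Unset Strict Implicit.
Unset Printing Implicit Defensive.
Import Order.TTheory GRing.Theory Num.Theory.
Local Open Scope ring_scope.

Section PolarDefs.
Variable R : realType.

Definition log2 (x : R) : R := ln x / ln 2.

Definition prob (T : finType) (P : T -> R) (E : pred T) : R :=
  \sum_(w | E w) P w.

(* conditional entropy H(f | g) (bits) under pmf P, convention 0 log 0 = 0 *)
Definition condEnt (T B C : finType) (P : T -> R) (f : T -> B) (g : T -> C) : R :=
  - \sum_(b : B) \sum_(c : C)
      (prob P (fun w => (f w == b) && (g w == c)) *
       log2 (prob P (fun w => (f w == b) && (g w == c)) /
             prob P (fun w => g w == c))).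

(* conditional pmf P(f = b | g = c); uniform on B if P(g = c) = 0
   (arbitrary convention for conditioning on null events) *)
Definition condProb (T B C : finType) (P : T -> R) (f : T -> B) (g : T -> C)
    (b : B) (c : C) : R :=
  let pc := prob P (fun w => g w == c) in
  if pc == 0 then (#|B|%:R)^-1
  else prob P (fun w => (f w == b) && (g w == c)) / pc.

Definition KL (T : finType) (q p : T -> R) : \bar R :=
  if [exists w, (0 < q w) && (p w == 0)] then +oo%E
  else (\sum_(w : T) q w * log2 (q w / p w))%:E.

End PolarDefs.

Lemma polar_dim_eq (n : nat) : (2 ^ n + 2 ^ n = 2 ^ n.+1)%N.
Proof. by rewrite expnS mul2n addnn. Qed.

(* G_{2^n} = [[1,0],[1,1]]^{(x) n} over GF(2), via F (x) G_{2^(n-1)} *)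
Fixpoint polarG (n : nat) : 'M['F_2]_(2 ^ n) :=
  match n return 'M['F_2]_(2 ^ n) with
  | 0 => 1%:M
  | n'.+1 => castmx (polar_dim_eq n', polar_dim_eq n')
               (block_mx (polarG n') 0 (polarG n') (polarG n'))
  end.

(* prefix a^{1:i} (0-based indices < i), other positions padded by 0 *)
Definition pref (K : nat) (i : nat) (a : 'rV['F_2]_K) : {ffun 'I_K -> 'F_2} :=
  [ffun k : 'I_K => if (k < i)%N then a 0 k else 0].

Definition blk (K : nat) (Y Z : finType) : finType :=
  ('rV['F_2]_K * 'rV['F_2]_K * {ffun 'I_K -> Y} * {ffun 'I_K -> Z})%type.

Definition bU K Y Z (w : blk K Y Z) := w.1.1.1.
Definition bX K Y Z (w : blk K Y Z) := w.1.1.2.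
Definition bY K Y Z (w : blk K Y Z) := w.1.2.
Definition bZ K Y Z (w : blk K Y Z) := w.2.

Section Construction.
Variable R : realType.
Variables (Y Z : finType).
Variable qUX : 'F_2 * 'F_2 -> R.
Variable W : 'F_2 -> Y * Z -> R.
Variable n : nat.
Variable beta : R.

Let K := (2 ^ n)%N.
Let G := polarG n.

Definition deltaK : R := 2 `^ (- ((K%:R) `^ beta)).

Definition qK (w : blk K Y Z) : R :=
  \prod_(i < K) (qUX (bU w 0 i, bX w 0 i) * W (bX w 0 i) (bY w i, bZ w i)).

Definition HA (i : 'I_K) : R :=
  condEnt qK (fun w => (bU w *m G) 0 i) (fun w => pref i (bU w *m G)).
Definition HV (i : 'I_K) : R :=
  condEnt qK (fun w => (bX w *m G) 0 i)
             (fun w => (pref i (bX w *m G), bU w)).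

Definition VU : pred 'I_K := fun i => 1 - deltaK < HA i.
Definition VXU : pred 'I_K := fun i => 1 - deltaK < HV i.

Definition condA (j : 'I_K) (b : 'F_2) (a : 'rV['F_2]_K) : R :=
  condProb qK (fun w => (bU w *m G) 0 j) (fun w => pref j (bU w *m G))
           b (pref j a).
Definition condV (j : 'I_K) (b : 'F_2) (v u : 'rV['F_2]_K) : R :=
  condProb qK (fun w => (bX w *m G) 0 j)
           (fun w => (pref j (bX w *m G), bU w)) b (pref j v, u).

Definition ptA (a : 'rV['F_2]_K) : R :=
  \prod_(j < K) (if VU j then 2^-1 else condA j (a 0 j) a).
Definition ptV (v u : 'rV['F_2]_K) : R :=
  \prod_(j < K) (if VXU j then 2^-1 else condV j (v 0 j) v u).

Definition ptK (w : blk K Y Z) : R :=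
  \sum_(a : 'rV['F_2]_K) \sum_(v : 'rV['F_2]_K)
     (if (a *m G == bU w) && (v *m G == bX w) then
        ptA a * ptV v (a *m G) *
        \prod_(i < K) W (bX w 0 i) (bY w i, bZ w i)
      else 0).

(* length-N = K*L sequences, stored as the concatenation of L sub-blocks *)
Definition qN (L : nat) (w : {ffun 'I_L -> blk K Y Z}) : R :=
  \prod_(l < L) qK (w l).
Definition ptN (L : nat) (w : {ffun 'I_L -> blk K Y Z}) : R :=
  \prod_(l < L) ptK (w l).

End Construction.

From HB Require Import structures.
From mathcomp Require Import all_boot all_order all_algebra.
From mathcomp Require Import all_classical all_reals all_analysis.
From mathcomp Require Import lra.
Import Order.TTheory GRing.Theory Num.Theory.
Local Open Scope ring_scope.
Set Implicit Arguments. Unset Strict Implicit. Unset Printing Implicit Defensive.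

(* In one sub-block, G is an involution, so U and X are functions of A = U G
   and V = X G, and the chain rule along the coordinates of A and V gives
     q(u,x,y,z) = prod_j q(a_j | a^{<j}) * prod_j q(v_j | v^{<j}, u) * p(y,z | x).
   The law p~ has the same factors, except that for j in V_U (resp. V_{X|U})
   the conditional is replaced by 1/2.  Hence log2 (q / p~) is the sum over
   these frozen indices of 1 + log2 q(. | .), whose q-expectation is
   1 - H(A_j | A^{<j}) (resp. 1 - H(V_j | V^{<j} U)) < delta_K: a sub-block
   contributes at most 2 K delta_K, and divergence adds up over the L
   independent sub-blocks. *)

Lemma castmx_mulmx (R : pzRingType) m m' (e : m = m') (A B : 'M[R]_m) :
  castmx (e, e) A *m castmx (e, e) B = castmx (e, e) (A *m B).
Proof. by case: m' / e. Qed.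

Lemma castmx_scalar (R : pzRingType) m m' (e : m = m') (a : R) :
  castmx (e, e) (a%:M : 'M[R]_m) = a%:M.
Proof. by case: m' / e. Qed.

Lemma polarG_invol n : polarG n *m polarG n = 1%:M.
Proof.
elim: n => [|n IH] /=; first by rewrite mul1mx.
rewrite castmx_mulmx mulmx_block IH !mulmx0 !mul0mx !addr0 add0r.
have -> : (1%:M + 1%:M : 'M['F_2]_(2 ^ n)) = 0.
  by apply/matrixP => i j; rewrite !mxE; apply: addrr_pchar2; apply: pchar_Fp.
by rewrite -scalar_mx_block castmx_scalar.
Qed.

Lemma polarG_mulK n (a : 'rV['F_2]_(2 ^ n)) : a *m polarG n *m polarG n = a.
Proof. by rewrite -mulmxA polarG_invol mulmx1. Qed.

Lemma eq_polarG_mul n (a b : 'rV['F_2]_(2 ^ n)) :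
  (a *m polarG n == b) = (a == b *m polarG n).
Proof. by apply/eqP/eqP => [<-|->]; rewrite polarG_mulK. Qed.

Lemma polarG_mul_inj n (a b : 'rV['F_2]_(2 ^ n)) :
  (a *m polarG n == b *m polarG n) = (a == b).
Proof. by rewrite eq_polarG_mul polarG_mulK. Qed.

Section Prefix.
Variable k : nat.
Implicit Types a b : 'rV['F_2]_k.

Lemma pref0 a b : pref 0 a = pref 0 b.
Proof. by apply/ffunP => i; rewrite !ffunE. Qed.

Lemma pref_full a b : (pref k a == pref k b) = (a == b).
Proof.
apply/eqP/eqP => [eq_ab|-> //]; apply/matrixP => i j; rewrite (ord1 i).
by have := congr1 (fun f : {ffun 'I_k -> 'F_2} => f j) eq_ab; rewrite !ffunE ltn_ord.
Qed.

Lemma prefS (j : 'I_k) a b :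
  (pref j.+1 a == pref j.+1 b) = (a 0 j == b 0 j) && (pref j a == pref j b).
Proof.
apply/eqP/andP => [eq_ab|[/eqP eq_j /eqP eq_lt]].
  split.
    by have := congr1 (fun f : {ffun 'I_k -> 'F_2} => f j) eq_ab; rewrite !ffunE ltnSn => ->.
  apply/eqP/ffunP => i; rewrite !ffunE; case: ifP => // lt_ij.
  by have := congr1 (fun f : {ffun 'I_k -> 'F_2} => f i) eq_ab; rewrite !ffunE ltnS ltnW.
apply/ffunP => i; rewrite !ffunE ltnS leq_eqVlt.
case: eqP => [/val_inj -> // | _] /=; case: ifP => // lt_ij.
by have := congr1 (fun f : {ffun 'I_k -> 'F_2} => f i) eq_lt; rewrite !ffunE lt_ij.
Qed.

End Prefix.

Lemma telescope_prodf_ord (F : fieldType) (h : nat -> F) m :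
  (forall i, (i <= m)%N -> h i != 0) -> \prod_(i < m) (h i.+1 / h i) = h m / h 0.
Proof.
case: m => [|m] h_neq0; first by rewrite big_ord0 divff ?h_neq0.
rewrite -(big_mkord xpredT (fun i => h i.+1 / h i)) telescope_prodf // => i.
by case/andP=> _ /ltnW; apply: h_neq0.
Qed.

Section Log2.
Variable R : realType.
Implicit Types x y : R.

Lemma log21 : log2 (1 : R) = 0.
Proof. by rewrite /log2 ln1 mul0r. Qed.

Lemma log2M x y : 0 < x -> 0 < y -> log2 (x * y) = log2 x + log2 y.
Proof. by move=> x0 y0; rewrite /log2 lnM ?posrE // mulrDl. Qed.

Lemma log2_divV2 x : 0 < x -> log2 (x / 2^-1) = 1 + log2 x.
Proof.
move=> x0; rewrite invrK mulrC log2M // /log2 divff //.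
by apply/lt0r_neq0/ln_gt0; rewrite ltr1n.
Qed.

Lemma log2_prod (I : finType) (P : pred I) (F : I -> R) :
  (forall i, 0 < F i) -> log2 (\prod_(i | P i) F i) = \sum_(i | P i) log2 (F i).
Proof.
move=> F_gt0; suff [] : 0 < \prod_(i | P i) F i /\
    log2 (\prod_(i | P i) F i) = \sum_(i | P i) log2 (F i) by [].
elim/big_rec2: _ => [|i p s _ [p_gt0 <-]]; first by rewrite log21.
by rewrite mulr_gt0 // log2M.
Qed.

Lemma log2_prod_ratio (I : finType) (P : pred I) (F : I -> R) c :
  0 < c -> (forall i, 0 < F i) ->
  log2 (\prod_i F i / \prod_i (if P i then c else F i)) =
  \sum_(i | P i) log2 (F i / c).
Proof.
move=> c_gt0 F_gt0; rewrite -prodf_div (bigID P) /=.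
rewrite [X in _ * X]big1 => [|i /negbTE ->]; last by rewrite divff ?lt0r_neq0.
rewrite mulr1 (eq_bigr (fun i => F i / c)) => [|i -> //].
by rewrite log2_prod // => i; rewrite divr_gt0.
Qed.

End Log2.

Section Pmf.
Variables (R : realType) (T : finType) (P : T -> R).
Hypothesis P_ge0 : forall w, 0 <= P w.

Lemma prob_ge0 (E : pred T) : 0 <= prob P E.
Proof. exact: sumr_ge0. Qed.

Lemma prob_le (E E' : pred T) : (forall w, E w -> E' w) -> prob P E <= prob P E'.
Proof.
move=> sub_EE'; rewrite /prob [leLHS]big_mkcond [leRHS]big_mkcond /=.
by apply: ler_sum => w _; case: ifP => [/sub_EE' -> //|_]; case: ifP.
Qed.

Lemma prob_ge_mass (E : pred T) w : E w -> P w <= prob P E.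
Proof. by move=> Ew; rewrite /prob (bigD1 w) //= lerDl prob_ge0. Qed.

Lemma condProbE (B C : finType) (f : T -> B) (g : T -> C) b c :
  prob P (fun w => g w == c) != 0 ->
  condProb P f g b c =
  prob P (fun w => (f w == b) && (g w == c)) / prob P (fun w => g w == c).
Proof. by rewrite /condProb => /negbTE ->. Qed.

Lemma condProb_inj (B C C' : finType) (f : T -> B) (g : T -> C) (h : C -> C') b c :
  injective h -> condProb P f (fun w => h (g w)) b (h c) = condProb P f g b c.
Proof.
move=> h_inj; have hE w : (h (g w) == h c) = (g w == c) by exact: inj_eq.
rewrite /condProb /prob (eq_bigl _ _ hE); congr (if _ then _ else _ / _).
by apply: eq_bigl => w; rewrite hE.
Qed.

Lemma expect_log2_condProb (B C : finType) (f : T -> B) (g : T -> C) :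
  \sum_w P w * log2 (condProb P f g (f w) (g w)) = - condEnt P f g.
Proof.
rewrite /condEnt opprK pair_bigA /= (partition_big (fun w => (f w, g w)) xpredT) //=.
apply: eq_bigr => -[b c] _.
rewrite (eq_bigr (fun w => P w * log2 (condProb P f g b c))); last first.
  by move=> w /eqP[-> ->].
rewrite -mulr_suml (eq_bigl (fun w => (f w == b) && (g w == c))) -/(prob _ _); last first.
  by move=> w; rewrite xpair_eqE.
(* On a null conditioning event the junk value of [condProb] has weight 0. *)
rewrite /condProb; case: eqP => [gc0|//].
suff -> : prob P (fun w => (f w == b) && (g w == c)) = 0 by rewrite !mul0r.
by apply/eqP; rewrite eq_le prob_ge0 -gc0 andbT; apply: prob_le => w /andP[].
Qed.

Section PrefixChain.
Variables (C : finType) (k : nat) (f : T -> 'rV['F_2]_k) (g : T -> C).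
Variables (a : 'rV['F_2]_k) (c : C).
Hypothesis joint_gt0 : 0 < prob P (fun w => (f w == a) && (g w == c)).

Let condPref (j : 'I_k) :=
  condProb P (fun w => f w 0 j) (fun w => (pref j (f w), g w)) (a 0 j) (pref j a, c).

Let p (i : nat) := prob P (fun w => (pref i (f w), g w) == (pref i a, c)).

Let p_gt0 i : 0 < p i.
Proof. by apply: lt_le_trans joint_gt0 _; apply: prob_le => w /andP[/eqP-> /eqP->]. Qed.

Let condPrefE (j : 'I_k) : condPref j = p j.+1 / p j.
Proof.
rewrite /condPref condProbE ?lt0r_neq0 ?p_gt0 //; congr (_ / _).
by apply: eq_bigl => w; rewrite !xpair_eqE prefS andbA.
Qed.

Lemma condProb_pref_gt0 (j : 'I_k) : 0 < condPref j.
Proof. by rewrite condPrefE divr_gt0 ?p_gt0. Qed.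

Lemma prob_pref_chain :
  prob P (fun w => (f w == a) && (g w == c)) =
  prob P (fun w => g w == c) * \prod_(j < k) condPref j.
Proof.
under eq_bigr do rewrite condPrefE.
rewrite telescope_prodf_ord => [|i _]; last by rewrite lt0r_neq0 ?p_gt0.
have -> : p 0 = prob P (fun w => g w == c).
  by apply: eq_bigl => w; rewrite xpair_eqE (pref0 (f w) a) eqxx.
have -> : p k = prob P (fun w => (f w == a) && (g w == c)).
  by apply: eq_bigl => w; rewrite xpair_eqE pref_full.
rewrite mulrC divfK // lt0r_neq0 // (lt_le_trans joint_gt0) //.
by apply: prob_le => w /andP[].
Qed.

End PrefixChain.

End Pmf.

Section Sums.
Variable R : realType.

Lemma sum_pair (A B : finType) (F : A * B -> R) :
  \sum_w F w = \sum_a \sum_b F (a, b).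
Proof. by rewrite pair_bigA; apply: eq_bigr => -[]. Qed.

Lemma sum_ffun2_prod (I T1 T2 : finType) (F : I -> T1 -> T2 -> R) :
  \sum_(f : {ffun I -> T1}) \sum_(g : {ffun I -> T2}) \prod_i F i (f i) (g i) =
  \prod_i \sum_t1 \sum_t2 F i t1 t2.
Proof.
under [RHS]eq_bigr do rewrite pair_bigA.
rewrite bigA_distr_bigA pair_bigA /=.
rewrite (reindex (fun h : {ffun I -> T1 * T2} =>
  ([ffun i => (h i).1], [ffun i => (h i).2]))) /=.
  by apply: eq_bigr => h _; apply: eq_bigr => i _; rewrite !ffunE.
exists (fun fg : {ffun I -> T1} * {ffun I -> T2} => [ffun i => (fg.1 i, fg.2 i)]).
  by move=> h _; apply/ffunP => i; rewrite !ffunE; case: (h i).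
by move=> [f g] _; congr (_, _); apply/ffunP => i; rewrite !ffunE.
Qed.

Lemma sum_row_ffun (T : finType) k (F : 'rV[T]_k -> R) :
  \sum_(r : 'rV[T]_k) F r = \sum_(f : {ffun 'I_k -> T}) F (\row_i f i).
Proof.
apply: (reindex (fun f : {ffun 'I_k -> T} => \row_i f i)).
exists (fun r : 'rV[T]_k => [ffun i => r 0 i]) => [f _|r _].
  by apply/ffunP => i; rewrite ffunE mxE.
by apply/matrixP => i j; rewrite mxE ffunE (ord1 i).
Qed.

Lemma sum_row2_prod (T1 T2 : finType) k (F : 'I_k -> T1 -> T2 -> R) :
  \sum_(u : 'rV[T1]_k) \sum_(x : 'rV[T2]_k) \prod_i F i (u 0 i) (x 0 i) =
  \prod_i \sum_t1 \sum_t2 F i t1 t2.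
Proof.
rewrite -sum_ffun2_prod sum_row_ffun; apply: eq_bigr => f _.
rewrite sum_row_ffun; apply: eq_bigr => g _.
by apply: eq_bigr => i _; rewrite !mxE.
Qed.

Lemma sum_ffun_prod_coord (I T : finType) (q D : T -> R) (i : I) :
  \sum_t q t = 1 ->
  \sum_(w : {ffun I -> T}) (\prod_l q (w l)) * D (w i) = \sum_t q t * D t.
Proof.
move=> q_sum1.
transitivity (\sum_(w : {ffun I -> T})
    \prod_l (if l == i then q (w l) * D (w l) else q (w l))).
  apply: eq_bigr => w _; rewrite [RHS](bigD1 i) //= eqxx (bigD1 i) //= mulrAC.
  by congr (_ * _); apply: eq_bigr => l /negbTE ->.
rewrite -(bigA_distr_bigA (fun l t => if l == i then q t * D t else q t)).
by rewrite (bigD1 i) //= eqxx [X in _ * X]big1 ?mulr1 // => l /negbTE ->.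
Qed.

Lemma sum_gap_le_card (I : finType) (P : pred I) (H : I -> R) d :
  0 <= d -> (forall i, P i -> 1 - d < H i) ->
  \sum_(i | P i) (1 - H i) <= #|I|%:R * d.
Proof.
move=> d_ge0 H_gt; rewrite mulr_natl -sumr_const big_mkcond /=.
by apply: ler_sum => i _; case: ifP => // /H_gt; lra.
Qed.

End Sums.

Lemma KL_finE (R : realType) (T : finType) (q p : T -> R) :
  (forall t, 0 < q t -> 0 < p t) ->
  KL q p = (\sum_t q t * log2 (q t / p t))%:E.
Proof.
move=> p_gt0; rewrite /KL; case: existsP => // -[t /andP[/p_gt0 pt_gt0 /eqP pt0]].
by move: pt_gt0; rewrite pt0 ltxx.
Qed.

Lemma KL_ffun_prod (R : realType) (I T : finType) (q p : T -> R) :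
  (forall t, 0 <= q t) -> \sum_t q t = 1 -> (forall t, 0 < q t -> 0 < p t) ->
  KL (fun w : {ffun I -> T} => \prod_i q (w i)) (fun w => \prod_i p (w i)) =
  (#|I|%:R * \sum_t q t * log2 (q t / p t))%:E.
Proof.
move=> q_ge0 q_sum1 p_gt0.
have q_gt0 (w : {ffun I -> T}) i : 0 < \prod_l q (w l) -> 0 < q (w i).
  move=> qw_gt0; rewrite lt0r q_ge0 andbT; apply: contraTneq qw_gt0 => qi0.
  by rewrite (bigD1 i) //= qi0 mul0r ltxx.
rewrite KL_finE => [|w /q_gt0 qw_gt0]; last by apply: prodr_gt0 => i _; apply/p_gt0.
congr (_%:E).
transitivity (\sum_(w : {ffun I -> T})
    \sum_i (\prod_l q (w l)) * log2 (q (w i) / p (w i))).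
  apply: eq_bigr => w _; rewrite -mulr_sumr.
  have [->|qw_neq0] := eqVneq (\prod_l q (w l)) 0; first by rewrite !mul0r.
  have qw_gt0 : 0 < \prod_l q (w l) by rewrite lt0r qw_neq0 prodr_ge0.
  rewrite -prodf_div log2_prod // => i.
  by rewrite divr_gt0 // ?p_gt0 // q_gt0.
rewrite exchange_big /=.
under eq_bigr do rewrite (sum_ffun_prod_coord (fun t => log2 (q t / p t)) _ q_sum1).
by rewrite sumr_const mulr_natl.
Qed.

Section SubBlock.
Variables (R : realType) (Y Z : finType).
Variables (qUX : 'F_2 * 'F_2 -> R) (W : 'F_2 -> Y * Z -> R) (n : nat) (beta : R).
Hypothesis qUX_ge0 : forall ux, 0 <= qUX ux.
Hypothesis qUX_sum1 : \sum_ux qUX ux = 1.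
Hypothesis W_ge0 : forall x yz, 0 <= W x yz.
Hypothesis W_sum1 : forall x, \sum_yz W x yz = 1.

Local Notation K := (2 ^ n)%N.
Local Notation G := (polarG n).
Local Notation q := (@qK R Y Z qUX W n).
Local Notation pt := (@ptK R Y Z qUX W n beta).
Local Notation delta := (@deltaK R n beta).
Implicit Types (w : blk K Y Z) (u x : 'rV['F_2]_K).

Definition qUXK u x : R := \prod_(i < K) qUX (u 0 i, x 0 i).
Definition chanK w : R := \prod_(i < K) W (bX w 0 i) (bY w i, bZ w i).

Let cA w (j : 'I_K) := condA qUX W j ((bU w *m G) 0 j) (bU w *m G).
Let cV w (j : 'I_K) := condV qUX W j ((bX w *m G) 0 j) (bX w *m G) (bU w).

Lemma qK_split w : q w = qUXK (bU w) (bX w) * chanK w.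
Proof. exact: big_split. Qed.

Lemma qK_ge0 w : 0 <= q w.
Proof. by apply: prodr_ge0 => i _; apply: mulr_ge0. Qed.

Lemma chanK_ge0 w : 0 <= chanK w.
Proof. exact: prodr_ge0. Qed.

Lemma sum_blk (F : blk K Y Z -> R) :
  \sum_w F w = \sum_u \sum_x \sum_y \sum_z F (u, x, y, z).
Proof. by rewrite !sum_pair. Qed.

Lemma chanK_sum1 x : \sum_(y : {ffun 'I_K -> Y}) \sum_(z : {ffun 'I_K -> Z})
  \prod_(i < K) W (x 0 i) (y i, z i) = 1.
Proof.
rewrite (sum_ffun2_prod (fun i a b => W (x 0 i) (a, b))).
by apply: big1 => i _; rewrite -sum_pair W_sum1.
Qed.

Lemma qUXK_sum1 : \sum_u \sum_x qUXK u x = 1.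
Proof.
rewrite (sum_row2_prod (fun i a b => qUX (a, b))).
by apply: big1 => i _; rewrite -sum_pair qUX_sum1.
Qed.

Lemma prob_qK_UX u x : prob q (fun w => (bU w == u) && (bX w == x)) = qUXK u x.
Proof.
rewrite /prob big_mkcond sum_blk (bigD1 u) //= [X in _ + X]big1 ?addr0; last first.
  move=> u' /negbTE neq_u; apply: big1 => x' _.
  by apply: big1 => y _; apply: big1 => z _; rewrite /bU /= neq_u.
rewrite (bigD1 x) //= [X in _ + X]big1 ?addr0; last first.
  move=> x' /negbTE neq_x; apply: big1 => y _.
  by apply: big1 => z _; rewrite /bU /bX /= neq_x andbF.
rewrite /bU /bX /= !eqxx /= -[RHS]mulr1 -(chanK_sum1 x) mulr_sumr.
by apply: eq_bigr => y _; rewrite mulr_sumr; apply: eq_bigr => z _; rewrite qK_split.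
Qed.

Lemma qK_sum1 : \sum_w q w = 1.
Proof.
rewrite (partition_big (fun w => (bU w, bX w)) xpredT) //= -qUXK_sum1 pair_bigA.
by apply: eq_bigr => -[u x] _; rewrite -prob_qK_UX; apply: eq_bigl => w; rewrite xpair_eqE.
Qed.

(* Pairing with [tt] makes the conditioning of A on its own prefix an instance
   of [prob_pref_chain] with trivial side information. *)
Lemma condA_prefE (j : 'I_K) b a :
  condA qUX W j b a = condProb q (fun w => (bU w *m G) 0 j)
    (fun w => (pref j (bU w *m G), tt)) b (pref j a, tt).
Proof. by rewrite /condA (@condProb_inj _ _ q _ _ _ _ _ (pair^~ tt)) // => ? ? []. Qed.

Let prob_A_gt0 w : 0 < q w ->
  0 < prob q (fun w' => (bU w' *m G == bU w *m G) && (tt == tt)).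
Proof.
by move=> qw_gt0; apply: lt_le_trans qw_gt0 (prob_ge_mass qK_ge0 _); rewrite !eqxx.
Qed.

Let prob_VU_gt0 w : 0 < q w ->
  0 < prob q (fun w' => (bX w' *m G == bX w *m G) && (bU w' == bU w)).
Proof.
by move=> qw_gt0; apply: lt_le_trans qw_gt0 (prob_ge_mass qK_ge0 _); rewrite !eqxx.
Qed.

Lemma cA_gt0 w j : 0 < q w -> 0 < cA w j.
Proof.
by move=> /prob_A_gt0 /(condProb_pref_gt0 qK_ge0) /(_ j); rewrite /cA condA_prefE.
Qed.

Lemma cV_gt0 w j : 0 < q w -> 0 < cV w j.
Proof. by move=> /prob_VU_gt0 /(condProb_pref_gt0 qK_ge0) /(_ j). Qed.

Lemma prob_qK_U_chain w : 0 < q w ->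
  prob q (fun w' => bU w' == bU w) = \prod_j cA w j.
Proof.
move=> /prob_A_gt0 /(prob_pref_chain qK_ge0).
rewrite [X in X * _](_ : _ = 1) ?mul1r; last exact: qK_sum1.
under [X in _ = X]eq_bigr do rewrite -condA_prefE.
by move=> <-; apply: eq_bigl => w'; rewrite andbT polarG_mul_inj.
Qed.

Lemma prob_qK_UX_chain w : 0 < q w ->
  qUXK (bU w) (bX w) = prob q (fun w' => bU w' == bU w) * \prod_j cV w j.
Proof.
move=> /prob_VU_gt0 /(prob_pref_chain qK_ge0) <-.
by rewrite -prob_qK_UX; apply: eq_bigl => w'; rewrite polarG_mul_inj andbC.
Qed.

Lemma qK_chain w : 0 < q w -> q w = \prod_j cA w j * \prod_j cV w j * chanK w.
Proof.
by move=> qw_gt0; rewrite qK_split prob_qK_UX_chain // prob_qK_U_chain.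
Qed.

Lemma ptK_split w :
  pt w = ptA qUX W beta (bU w *m G) * ptV qUX W beta (bX w *m G) (bU w) * chanK w.
Proof.
rewrite /ptK (bigD1 (bU w *m G)) //= [X in _ + X]big1 ?addr0; last first.
  move=> a /negbTE neq_a; apply: big1 => v _.
  by rewrite eq_polarG_mul neq_a.
rewrite (bigD1 (bX w *m G)) //= [X in _ + X]big1 ?addr0; last first.
  by move=> v /negbTE neq_v; rewrite polarG_mulK eqxx eq_polarG_mul neq_v.
by rewrite !polarG_mulK !eqxx.
Qed.

Lemma chanK_gt0 w : 0 < q w -> 0 < chanK w.
Proof.
move=> qw_gt0; rewrite lt0r chanK_ge0 andbT; apply: contraTneq qw_gt0 => chan0.
by rewrite qK_split chan0 mulr0 ltxx.
Qed.

Let ptA_gt0 w : 0 < q w -> 0 < ptA qUX W beta (bU w *m G).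
Proof.
move=> qw_gt0; apply: prodr_gt0 => j _.
by case: ifP => _; [rewrite invr_gt0 | apply: cA_gt0].
Qed.

Let ptV_gt0 w : 0 < q w -> 0 < ptV qUX W beta (bX w *m G) (bU w).
Proof.
move=> qw_gt0; apply: prodr_gt0 => j _.
by case: ifP => _; [rewrite invr_gt0 | apply: cV_gt0].
Qed.

Lemma ptK_gt0 w : 0 < q w -> 0 < pt w.
Proof. by move=> qw_gt0; rewrite ptK_split !mulr_gt0 ?ptA_gt0 ?ptV_gt0 ?chanK_gt0. Qed.

Lemma log2_qK_ptK w : 0 < q w ->
  log2 (q w / pt w) =
  \sum_(j | VU qUX W beta j) (1 + log2 (cA w j)) +
  \sum_(j | VXU qUX W beta j) (1 + log2 (cV w j)).
Proof.
move=> qw_gt0.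
have cA_pos j : 0 < cA w j by exact: cA_gt0.
have cV_pos j : 0 < cV w j by exact: cV_gt0.
have prod_cA_gt0 : 0 < \prod_j cA w j by apply: prodr_gt0.
have prod_cV_gt0 : 0 < \prod_j cV w j by apply: prodr_gt0.
rewrite {1}qK_chain // ptK_split -mulf_div divff ?mulr1 ?lt0r_neq0 ?chanK_gt0 //.
rewrite -mulf_div log2M ?divr_gt0 ?ptA_gt0 ?ptV_gt0 //.
rewrite !log2_prod_ratio ?invr_gt0 //.
by congr (_ + _); apply: eq_bigr => j _; rewrite log2_divV2.
Qed.

Lemma expect_gap_cA j : \sum_w q w * (1 + log2 (cA w j)) = 1 - HA qUX W j.
Proof.
under eq_bigr do rewrite mulrDr mulr1.
rewrite big_split /= qK_sum1; congr (_ + _).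
exact: (expect_log2_condProb qK_ge0 (fun w => (bU w *m G) 0 j)
          (fun w => pref j (bU w *m G))).
Qed.

Lemma expect_gap_cV j : \sum_w q w * (1 + log2 (cV w j)) = 1 - HV qUX W j.
Proof.
under eq_bigr do rewrite mulrDr mulr1.
rewrite big_split /= qK_sum1; congr (_ + _).
exact: (expect_log2_condProb qK_ge0 (fun w => (bX w *m G) 0 j)
          (fun w => (pref j (bX w *m G), bU w))).
Qed.

Lemma qK_ptK_div_le : \sum_w q w * log2 (q w / pt w) <= 2 * K%:R * delta.
Proof.
have -> : \sum_w q w * log2 (q w / pt w) =
    \sum_(j : 'I_K | VU qUX W beta j) (1 - HA qUX W j) +
    \sum_(j : 'I_K | VXU qUX W beta j) (1 - HV qUX W j).
  rewrite -(eq_bigr _ (fun j _ => expect_gap_cA j)).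
  rewrite -(eq_bigr _ (fun j _ => expect_gap_cV j)).
  rewrite exchange_big [X in _ = _ + X]exchange_big -big_split /=.
  apply: eq_bigr => w _; have [qw0|qw_neq0] := eqVneq (q w) 0.
    by rewrite qw0 mul0r !big1 ?addr0 // => j _; rewrite mul0r.
  by rewrite log2_qK_ptK ?lt0r ?qw_neq0 ?qK_ge0 // mulrDr !mulr_sumr.
have delta_ge0 : 0 <= delta by apply: powR_ge0.
rewrite -mulrA mulr2n mulrDl mul1r.
by apply: lerD; rewrite -[X in X%:R](card_ord K); apply: sum_gap_le_card.
Qed.

End SubBlock.

Theorem lemma2 (R : realType) (Y Z : finType) (S : Type)
    (qUX : 'F_2 * 'F_2 -> R) (W : S -> 'F_2 -> Y * Z -> R) (s : S)
    (n L : nat) (beta : R) :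
  (forall ux, 0 <= qUX ux) -> \sum_(ux : 'F_2 * 'F_2) qUX ux = 1 ->
  (forall s' x yz, 0 <= W s' x yz) ->
  (forall s' x, \sum_(yz : Y * Z) W s' x yz = 1) ->
  0 < beta < 2^-1 ->
  (KL (@qN R Y Z qUX (W s) n L) (@ptN R Y Z qUX (W s) n beta L)
     <= (2 * L%:R * (2 ^ n)%:R * @deltaK R n beta)%:E)%E.
Proof.
(* The bound holds for every beta; beta < 1/2 only makes delta_K vanish. *)
move=> qUX_ge0 qUX_sum1 W_ge0 W_sum1 _.
rewrite /qN /ptN KL_ffun_prod; last 3 first.
- exact: qK_ge0.
- exact: qK_sum1.
- exact: ptK_gt0.
rewrite card_ord lee_fin -!mulrA mulrCA ler_wpM2l // mulrA.
exact: qK_ptK_div_le.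
Qed.
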